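(* Let $X$ be a finite set, $f:X\to X$ a function, and consider the iterative generator $\mathcal G$ with state sequences $\mathcal G(s)=(x_0=s,x_1,x_2,\dots)$, $x_i=f(x_{i-1})$ for $i\ge 1$, $s\in X$. (1) For every seed $s\in X$, the state sequence $\vec x=\mathcal G(s)$ satisfies $\mathcal D_{\vec x}(k)=\min\{k,p\}$ for all $k\ge 1$, where $p$ is the length of the cycle that $\vec x$ eventually enters. (2) $\mathcal D_{\mathcal G}(k)=\min\{k,p\}$ for all $k\ge1$, where $p$ is the length of the shortest cycle of $f$ (i.e. the least $p\ge1$ such that $f^p(x)=x$ for some $x\in X$).
   Context: The diversity of a sequence $\vec x=(x_0,x_1,\dots)$ is the function $\mathcal D_{\vec x}(k)$, $k=1,2,\dots$, defined as the minimum, over all $i\ge 0$, of the number of distinct values among $x_i,x_{i+1},\dots,x_{i+k-1}$. The diversity of the generator is $\mathcal D_{\mathcal G}(k)=\min\{\mathcal D_{\mathcal G(s)}(k): s\in X\}$. Since $X$ is finite, every state sequence is eventually periodic, i.e. it eventually enters a cycle of $f$. *)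

From mathcomp Require Import all_boot.
From mathcomp Require Import boolp.
Set Implicit Arguments. Unset Strict Implicit. Unset Printing Implicit Defensive.

(* Minimum of a set of naturals given by a Prop predicate (0 if empty). *)
Definition natmin (P : nat -> Prop) : nat :=
  match pselect (exists n, P n) with
  | left h =>
      @ex_minn (fun n => `[< P n >])
        (let: ex_intro n Pn := h in ex_intro _ n (asboolT Pn))
  | right _ => 0
  end.

Definition window_distinct (T : finType) (x : nat -> T) (i k : nat) : nat :=
  #|[set x (i + j) | j : 'I_k]|.

Definition seq_diversity (T : finType) (x : nat -> T) (k : nat) : nat :=
  natmin (fun d => exists i, window_distinct x i k = d).

Definition state_seq (T : finType) (f : T -> T) (s : T) : nat -> T :=
  fun i => iter i f s.

Definition gen_diversity (T : finType) (f : T -> T) (k : nat) : nat :=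
  natmin (fun d => exists s : T, seq_diversity (state_seq f s) k = d).

Definition entered_cycle_length (T : finType) (f : T -> T) (s : T) : nat :=
  natmin (fun p => 0 < p /\ exists i, iter p f (iter i f s) = iter i f s).

Definition shortest_cycle_length (T : finType) (f : T -> T) : nat :=
  natmin (fun p => 0 < p /\ exists x : T, iter p f x = x).

From mathcomp Require Import all_boot.
From mathcomp Require Import boolp zify.

(* By minimality of p, two states less than p apart
   are distinct, so every window of length k carries at least min(k, p)
   values; a window starting on the cycle repeats with period p, so it
   carries at most p values and the bound is attained. For the generator,
   every entered cycle is a cycle of f, and a seed lying on a shortest cycle
   enters it at once. *)

Set Implicit Arguments. Unset Strict Implicit. Unset Printing Implicit Defensive.

Section NatMin.
Variable P : nat -> Prop.

Lemma natminP : (exists n, P n) -> P (natmin P).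
Proof. by rewrite /natmin; case: pselect => [h _|//]; case: ex_minnP => m /asboolP. Qed.

Lemma natmin_le n : P n -> natmin P <= n.
Proof.
move=> Pn; rewrite /natmin; case: pselect => [h|[]]; last by exists n.
by case: ex_minnP => m _ minm; apply/minm/asboolP.
Qed.

Lemma natmin_eq d : P d -> (forall e, P e -> d <= e) -> natmin P = d.
Proof.
move=> Pd mind; apply/eqP; rewrite eqn_leq natmin_le // mind //.
by apply: natminP; exists d.
Qed.

Lemma natmin_empty : ~ (exists n, P n) -> natmin P = 0.
Proof. by rewrite /natmin; case: pselect. Qed.

End NatMin.

Section Windows.
Variables (T : finType) (x : nat -> T) (i k : nat).

Lemma window_distinct_le_length : window_distinct x i k <= k.
Proof. by rewrite -[leqRHS]card_ord leq_imset_card. Qed.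

Lemma window_distinct_le_period p : 0 < p ->
  (forall j, x (i + j) = x (i + j %% p)) -> window_distinct x i k <= p.
Proof.
move=> p0 per; rewrite -[leqRHS](card_ord p).
apply: leq_trans (leq_imset_card (fun j : 'I_p => x (i + j)) predT).
apply/subset_leq_card/subsetP => _ /imsetP [j _ ->].
by apply/imsetP; exists (Ordinal (ltn_pmod j p0)); rewrite //= per.
Qed.

Lemma window_distinct_ge m : m <= k ->
  (forall a b, a < b < m -> x (i + a) <> x (i + b)) -> m <= window_distinct x i k.
Proof.
move=> mk sep.
have inj : injective (fun j : 'I_m => x (i + j)).
  move=> a b e; apply/val_inj/eqP; case: ltngtP => // [ab|ba]; exfalso.
  - by apply: (sep a b) e; rewrite ab /=.
  - by apply: (sep b a) (esym e); rewrite ba /=.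
rewrite /window_distinct -[leqLHS](card_ord m) -(card_imset predT inj).
apply/subset_leq_card/subsetP => _ /imsetP [j _ ->].
by apply/imsetP; exists (widen_ord mk j).
Qed.

End Windows.

Section StateSequences.
Variables (T : finType) (f : T -> T).

Lemma iter_mod_period p y j : iter p f y = y -> iter j f y = iter (j %% p) f y.
Proof.
move=> per; rewrite {1}(divn_eq j p) addnC iterD; congr (iter _ f _).
by elim: (j %/ p) => [|n IHn] //; rewrite mulSn iterD IHn per.
Qed.

Lemma eventually_periodic s :
  exists p i, 0 < p /\ iter p f (iter i f s) = iter i f s.
Proof.
have /trajectP [i lt_i per] := looping_order f s.
exists (order f s - i), i; split; first by rewrite subn_gt0.
by rewrite -iterD subnK ?(ltnW lt_i).
Qed.

Lemma entered_cycle_lengthP s : 0 < entered_cycle_length f s /\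
  exists i, iter (entered_cycle_length f s) f (iter i f s) = iter i f s.
Proof.
have [p [i [p0 per]]] := eventually_periodic s.
apply: (natminP (P := fun n => 0 < n /\ exists j, iter n f (iter j f s) = iter j f s)).
by exists p; split=> //; exists i.
Qed.

Lemma entered_cycle_length_le s p i : 0 < p ->
  iter p f (iter i f s) = iter i f s -> entered_cycle_length f s <= p.
Proof. by move=> p0 per; apply: natmin_le; split=> //; exists i. Qed.

Lemma entered_cycle_length_sep s i a b : a < b -> b - a < entered_cycle_length f s ->
  iter (i + a) f s <> iter (i + b) f s.
Proof.
move=> ab; rewrite ltnNge => /negP lt_ba e; apply: lt_ba.
apply: (@entered_cycle_length_le _ _ (i + a)); first by rewrite subn_gt0.
by rewrite -iterD addnCA subnK ?(ltnW ab) // -e.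
Qed.

Lemma state_seq_diversity s k : 0 < k ->
  seq_diversity (state_seq f s) k = minn k (entered_cycle_length f s).
Proof.
move=> k0; set p := entered_cycle_length f s.
have [p0 [i0 per]] := entered_cycle_lengthP s.
have lower j : minn k p <= window_distinct (state_seq f s) j k.
  apply: window_distinct_ge; first exact: geq_minl.
  move=> a b /andP [ab bm]; apply: entered_cycle_length_sep => //.
  by have := geq_minr k p; lia.
apply: natmin_eq => [|_ [j <-] //].
exists i0; apply/eqP; rewrite eqn_leq lower andbT leq_min window_distinct_le_length.
apply: window_distinct_le_period => // j.
by rewrite /state_seq ![i0 + _]addnC !iterD -(iter_mod_period _ per).
Qed.

Lemma shortest_cycle_length_le s :
  shortest_cycle_length f <= entered_cycle_length f s.
Proof.
have [p0 [i per]] := entered_cycle_lengthP s.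
by apply: natmin_le; split=> //; exists (iter i f s).
Qed.

Lemma shortest_cycle_lengthP (x0 : T) : 0 < shortest_cycle_length f /\
  exists y, iter (shortest_cycle_length f) f y = y.
Proof.
have [p0 [i per]] := entered_cycle_lengthP x0.
apply: (natminP (P := fun p => 0 < p /\ exists y, iter p f y = y)).
by exists (entered_cycle_length f x0); split=> //; exists (iter i f x0).
Qed.

Lemma entered_cycle_length_shortest y : 0 < shortest_cycle_length f ->
  iter (shortest_cycle_length f) f y = y ->
  entered_cycle_length f y = shortest_cycle_length f.
Proof.
move=> q0 per; apply/eqP; rewrite eqn_leq shortest_cycle_length_le andbT.
exact: (@entered_cycle_length_le _ _ 0).
Qed.

Lemma gen_diversity_eq k : 0 < k ->
  gen_diversity f k = minn k (shortest_cycle_length f).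
Proof.
move=> k0; case: (pickP (@predT T)) => [x0 _|empty]; last first.
  rewrite /gen_diversity natmin_empty; last by case=> _ [y _]; have := empty y.
  rewrite /shortest_cycle_length natmin_empty ?minn0 //.
  by case=> _ [_ [y _]]; have := empty y.
have [q0 [y per]] := shortest_cycle_lengthP x0.
apply: natmin_eq => [|_ [s <-]].
  by exists y; rewrite state_seq_diversity // entered_cycle_length_shortest.
rewrite state_seq_diversity // leq_min geq_minl /=.
exact: leq_trans (geq_minr _ _) (shortest_cycle_length_le s).
Qed.

End StateSequences.

Theorem mainTheorem1 (T : finType) (f : T -> T) :
  (forall (s : T) (k : nat), 0 < k ->
     seq_diversity (state_seq f s) k = minn k (entered_cycle_length f s)) /\
  (forall k : nat, 0 < k ->
     gen_diversity f k = minn k (shortest_cycle_length f)).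
Proof. by split=> [s k|k]; [apply: state_seq_diversity | apply: gen_diversity_eq]. Qed.
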